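(* Let $\mathcal V\cong\mathbb R^d$ be a finite-dimensional real normed space, $\mathcal X\subseteq\mathcal V$ convex, and $f:\mathcal V\to\mathbb R\cup\{+\infty\}$ proper, lower semicontinuous and convex with $\operatorname{dom} f=\mathcal X$ and nonempty solution set. Let $h$ be a $K$-strongly convex Bregman function on $\mathcal X$, suppose $f$ is relatively continuous with constant $G$, and let $(x_t)$, $(\delta_t)$ be generated by AdaMir run with a stochastic first-order oracle with noise bound $\sigma$. Then, almost surely, $$\delta_t^2\le\Big[\sqrt2\,G+\sqrt{2/K}\,\sigma\Big]^2\quad\text{for all }t\ge1.$$
   Context: $\mathcal V^*$ denotes the dual space with pairing $\langle\cdot,\cdot\rangle$ and dual norm $\|y\|_*=\max_{\|x\|\le1}\langle y,x\rangle$. For $x\in\operatorname{dom}\partial f$, $\nabla f(x)$ denotes a fixed selection of $\partial f(x)$. A Bregman function on $\mathcal X$ is a convex lower semicontinuous $h:\mathcal V\to\mathbb R\cup\{+\infty\}$ with $\operatorname{dom}\partial h\subseteq\mathcal X\subseteq\operatorname{dom}h$, whose subdifferential admits a continuous selection $\nabla h(x)\in\partial h(x)$ on $\operatorname{dom}\partial h$, and which is $K$-strongly convex ($K>0$): $h(x')\ge h(x)+\langle\nabla h(x),x'-x\rangle+\frac K2\|x'-x\|^2$ for all $x,x'\in\operatorname{dom}\partial h$. Bregman divergence: $D(p,x)=h(p)-h(x)-\langle\nabla h(x),p-x\rangle$; prox-mapping: $P_x(y)=\arg\min_{x'\in\mathcal X}\{\langle y,x-x'\rangle+D(x',x)\}$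 for $x\in\operatorname{dom}\partial h$, $y\in\mathcal V^*$. Stochastic AdaMir: pick $x_0\neq x_1$ in $\operatorname{dom}\partial h$, $\delta_0=[D(x_0,x_1)+D(x_1,x_0)]^{1/2}$. For $t=1,2,\dots$: $\gamma_t=\big(\sum_{s=0}^{t-1}\delta_s^2\big)^{-1/2}$; the oracle returns $g_t=\nabla f(x_t)+U_t$ with $\mathbb E[U_t\mid\mathcal F_t]=0$ ($\mathcal F_t$ the natural filtration of $(x_t)$) and $\|U_t\|_*^2\le\sigma^2$ almost surely; then $x_{t+1}=P_{x_t}(-\gamma_tg_t)$ and $\delta_t=[D(x_t,x_{t+1})+D(x_{t+1},x_t)]^{1/2}/\gamma_t$. $f$ is relatively continuous with constant $G>0$ if $f(x)-f(x')\le\langle\nabla f(x),x-x'\rangle\le G\sqrt{2D(x',x)}$ for all $x\in\operatorname{dom}\partial h$, $x'\in\operatorname{dom}h$. *)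

From HB Require Import structures.
From mathcomp Require Import all_boot all_order all_algebra.
From mathcomp Require Import all_classical all_reals all_analysis.
Set Implicit Arguments. Unset Strict Implicit. Unset Printing Implicit Defensive.
Import Order.TTheory GRing.Theory Num.Theory numFieldNormedType.Exports.
Local Open Scope classical_set_scope.
Local Open Scope ring_scope.

Section AdaMirDefs.
Context {R : realType} {d : nat}.
Local Notation V := 'rV[R]_d.

(* duality pairing <y, x> between V* (identified with 'rV_d) and V *)
Definition pair (y x : V) : R := \sum_(i < d) y ord0 i * x ord0 i.

Definition is_norm (N : V -> R) : Prop :=
  [/\ forall x, 0 <= N x, forall x, N x = 0 -> x = 0,
      forall (a : R) x, N (a *: x) = `|a| * N x
    & forall x y, N (x + y) <= N x + N y].

Definition dual_norm (N : V -> R) (y : V) : R :=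
  sup [set pair y x | x in [set x | N x <= 1]].

Definition edom (f : V -> \bar R) : set V := [set x | (f x < +oo)%E].

Definition proper_fun (f : V -> \bar R) : Prop :=
  (forall x, f x <> -oo%E) /\ (exists x, f x \is a fin_num).

Definition cvx_set (X : set V) : Prop :=
  forall (x y : V) (l : R), X x -> X y -> 0 <= l <= 1 -> X (l *: x + (1 - l) *: y).

Definition cvx_efun (f : V -> \bar R) : Prop :=
  forall (x y : V) (l : R), 0 <= l <= 1 ->
    (f (l *: x + (1 - l) *: y)%R <= l%:E * f x + (1 - l)%R%:E * f y)%E.

Definition subdiff (f : V -> \bar R) (x : V) : set V :=
  [set y | f x \is a fin_num /\
           forall x', (f x + (pair y (x' - x)%R)%:E <= f x')%E].

Definition dom_subdiff (f : V -> \bar R) : set V :=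
  [set x | exists y, subdiff f x y].

(* Bregman divergence D(p, x) (used for p, x in dom h) *)
Definition breg (h : V -> \bar R) (nh : V -> V) (p x : V) : R :=
  fine (h p) - fine (h x) - pair (nh x) (p - x).

Definition bregman_fun (N : V -> R) (X : set V) (h : V -> \bar R) (nh : V -> V)
    (K : R) : Prop :=
  [/\ cvx_efun h /\ lower_semicontinuous h /\ (forall x, h x <> -oo%E),
      dom_subdiff h `<=` X /\ X `<=` edom h,
      (forall x, dom_subdiff h x -> subdiff h x (nh x)) /\
        {within dom_subdiff h, continuous nh},
      0 < K
    & forall x x', dom_subdiff h x -> dom_subdiff h x' ->
        (h x + (pair (nh x) (x' - x)%R)%:E + (K / 2 * N (x' - x)%R ^+ 2)%R%:E
           <= h x')%E].

Definition is_prox (X : set V) (h : V -> \bar R) (nh : V -> V) (x y z : V) : Prop :=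
  X z /\ forall z', X z' ->
    pair y (x - z) + breg h nh z x <= pair y (x - z') + breg h nh z' x.

Definition rel_continuous (f : V -> \bar R) (nf : V -> V) (h : V -> \bar R)
    (nh : V -> V) (G : R) : Prop :=
  0 < G /\ forall x x', dom_subdiff h x -> edom h x' ->
    (f x - f x' <= (pair (nf x) (x - x')%R)%:E)%E /\
    pair (nf x) (x - x') <= G * Num.sqrt (2 * breg h nh x' x).

Definition gamma {T : Type} (delta : nat -> T -> R) (t : nat) (w : T) : R :=
  (Num.sqrt (\sum_(s < t) delta s w ^+ 2))^-1.

Definition nat_filtration {T : Type} (x : nat -> T -> V) (t : nat) : set (set T) :=
  <<s [set A | exists s (i : 'I_d) (B : set R),
          [/\ (s <= t)%N, measurable B & A = (fun w => x s w ord0 i) @^-1` B]] >>.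

End AdaMirDefs.

From HB Require Import structures.
From mathcomp Require Import all_boot all_order all_algebra.
From mathcomp Require Import all_classical all_reals all_analysis.
From mathcomp Require Import ring lra.
Import Order.TTheory GRing.Theory Num.Theory numFieldNormedType.Exports.
Local Open Scope classical_set_scope.
Local Open Scope ring_scope.

(* The prox step z = P_x(y) makes nh x + y a subgradient of h at z: the
   optimality condition of the prox holds on X, and it extends from dom ∂h to
   the whole space because proximal points of h (minimizers of h plus a
   quadratic) lie in dom ∂h.  Continuity of the selection nh then gives
   <nh z - w, x - z> >= 0 for every subgradient w at z and every x in dom h:
   compare with the subgradients nh q at proximal points q within O(t^2) of
   z + t (x - z) and let t -> 0.  For w = nh x + y this is the three-point
   inequality D(z,x) + D(x,z) <= <y, z - x>.  With y = -gamma (grad f(x) + U),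
   relative continuity bounds <grad f(x), x - z> by G sqrt(2 D(z,x)), the noise
   bound gives <U, x - z> <= sigma N(x - z), and strong convexity gives
   D(z,x), D(x,z) >= K/2 N(x - z)^2.  Hence
   sqrt(D(z,x) + D(x,z)) <= gamma (sqrt 2 G + sqrt(2/K) sigma), i.e. the bound
   on delta_t holds wherever the noise bound holds, that is almost surely. *)

Section Pairing.
Context {R : realType} {d : nat}.
Local Notation V := 'rV[R]_d.
Implicit Types (a b c : V).

Lemma pairDl a b c : pair (a + b) c = pair a c + pair b c.
Proof.
by rewrite /pair -big_split; apply: eq_bigr => i _; rewrite mxE mulrDl.
Qed.

Lemma pairDr a b c : pair c (a + b) = pair c a + pair c b.
Proof.
by rewrite /pair -big_split; apply: eq_bigr => i _; rewrite mxE mulrDr.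
Qed.

Lemma pairZl (k : R) a b : pair (k *: a) b = k * pair a b.
Proof.
by rewrite /pair mulr_sumr; apply: eq_bigr => i _; rewrite mxE mulrA.
Qed.

Lemma pairZr (k : R) a b : pair a (k *: b) = k * pair a b.
Proof.
by rewrite /pair mulr_sumr; apply: eq_bigr => i _; rewrite mxE mulrCA.
Qed.

Lemma pairC a b : pair a b = pair b a.
Proof. by apply: eq_bigr => i _; rewrite mulrC. Qed.

Lemma pairNl a b : pair (- a) b = - pair a b.
Proof. by rewrite -scaleN1r pairZl mulN1r. Qed.

Lemma pairNr a b : pair a (- b) = - pair a b.
Proof. by rewrite -scaleN1r pairZr mulN1r. Qed.

Lemma pairBl a b c : pair (a - b) c = pair a c - pair b c.
Proof. by rewrite pairDl pairNl. Qed.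

Lemma pairBr a b c : pair c (a - b) = pair c a - pair c b.
Proof. by rewrite pairDr pairNr. Qed.

Lemma pair0r a : pair a 0 = 0.
Proof. by rewrite -(scale0r 0) pairZr mul0r. Qed.

Lemma pair_self_ge0 a : 0 <= pair a a.
Proof. by apply: sumr_ge0 => i _; rewrite -expr2 sqr_ge0. Qed.

Lemma pair_selfD a b :
  pair (a + b) (a + b) = pair a a + 2 * pair a b + pair b b.
Proof. by rewrite !pairDl !pairDr (pairC b a); ring. Qed.

Lemma pair_selfZ (k : R) a : pair (k *: a) (k *: a) = k ^+ 2 * pair a a.
Proof. by rewrite pairZl pairZr mulrA. Qed.

Lemma normr_coord_le a (i : 'I_d) : `|a ord0 i| <= `|a|.
Proof.
by rewrite [leRHS]mx_normrE; apply/bigmax_geP; right; exists (ord0, i).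
Qed.

Lemma normr_pair_le a b : `|pair a b| <= d%:R * (`|a| * `|b|).
Proof.
apply: le_trans (ler_norm_sum _ _ _) _.
have -> : d%:R * (`|a| * `|b|) = \sum_(i < d) `|a| * `|b|.
  by rewrite sumr_const card_ord mulr_natl.
by apply: ler_sum => i _; rewrite normrM ler_pM ?normr_coord_le.
Qed.

Lemma pair_le_normr a b : pair a b <= d%:R * (`|a| * `|b|).
Proof. exact: le_trans (ler_norm _) (normr_pair_le a b). Qed.

Lemma normr_le_sqrt_pair a : `|a| <= Num.sqrt (pair a a).
Proof.
rewrite [leLHS]mx_normrE; apply: bigmax_le => [|[i j] _].
  exact: sqrtr_ge0.
rewrite (ord1 i) -(sqrtr_sqr (a ord0 j)) ler_wsqrtr // /pair (bigD1 j) //=.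
rewrite lerDl.
by apply: sumr_ge0 => k _; rewrite -expr2 sqr_ge0.
Qed.

Lemma pair_continuous {T : topologicalType} {f g : T -> V} :
  continuous f -> continuous g -> continuous (fun p => pair (f p) (g p)).
Proof.
move=> fc gc p; apply: cvg_big => [|i _]; first exact: add_continuous.
apply: (@cvgM _ _ _ _ (fun x => f x ord0 i) (fun x => g x ord0 i)).
  exact: continuous_comp (fc p) (@coord_continuous _ 1 d ord0 i (f p)).
exact: continuous_comp (gc p) (@coord_continuous _ 1 d ord0 i (g p)).
Qed.

Lemma pair_perturb_le {n0 n1 w v r : V} {t eps rho : R} : 0 < t ->
  0 <= pair (n1 - w) (t *: v + r) -> `|r| <= t ^+ 2 * rho ->
  `|n0 - n1| < eps ->
  - pair (n0 - w) v - eps * (d%:R * `|v|)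
    <= t * (d%:R * (eps + `|n0 - w|) * rho).
Proof.
move=> t0 mono hr hn.
have n1w : `|n1 - w| <= eps + `|n0 - w|.
  rewrite -(subrK n0 n1) -addrA; apply: le_trans (ler_normD _ _) _.
  by rewrite lerD2r distrC ltW.
have drift_le : pair (n1 - n0) v <= eps * (d%:R * `|v|).
  apply: le_trans (pair_le_normr _ _) _; rewrite mulrCA.
  by apply: ler_wpM2r; rewrite ?mulr_ge0 // distrC ltW.
have rem_le : pair (n1 - w) r <= d%:R * (eps + `|n0 - w|) * (t ^+ 2 * rho).
  apply: le_trans (pair_le_normr _ _) _; rewrite -[in leRHS]mulrA.
  by apply: ler_wpM2l => //; apply: ler_pM.
have split_mono : pair (n1 - w) (t *: v + r) =
    t * (pair (n0 - w) v + pair (n1 - n0) v) + pair (n1 - w) r.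
  by rewrite -pairDl [n0 - w + _]addrC addrA subrK pairDr pairZr.
rewrite split_mono in mono; rewrite -(ler_pM2l t0); nra.
Qed.

End Pairing.

Section Norm.
Context {R : realType} {d : nat}.
Local Notation V := 'rV[R]_d.
Context {N : V -> R}.
Hypothesis HN : is_norm N.

Lemma N_ge0 x : 0 <= N x.
Proof. by case: HN => + _ _ _; apply. Qed.

Lemma N_eq0 x : N x = 0 -> x = 0.
Proof. by case: HN => _ + _ _; apply. Qed.

Lemma NZ (a : R) x : N (a *: x) = `|a| * N x.
Proof. by case: HN => _ _ + _; apply. Qed.

Lemma ler_ND x y : N (x + y) <= N x + N y.
Proof. by case: HN => _ _ _; apply. Qed.

Lemma N0 : N 0 = 0.
Proof. by rewrite -(scale0r 0) NZ normr0 mul0r. Qed.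

Lemma NN x : N (- x) = N x.
Proof. by rewrite -scaleN1r NZ normrN normr1 mul1r. Qed.

Lemma N_le_mx_norm x : N x <= (\sum_(j < d) N 'e_j) * `|x|.
Proof.
rewrite {1}(row_sum_delta x) mulr_suml.
elim/big_ind2 : _ => [|a b c e ab ce|j _].
- by rewrite N0.
- exact: le_trans (ler_ND _ _) (lerD ab ce).
- by rewrite NZ mulrC ler_wpM2l ?N_ge0 ?normr_coord_le.
Qed.

Lemma N_continuous : continuous N.
Proof.
pose C := \sum_(j < d) N 'e_j + 1.
have C0 : 0 < C by rewrite ltr_wpDl ?sumr_ge0// => j _; exact: N_ge0.
have N_lip y z : `|N y - N z| <= C * `|y - z|.
  have le_C v : N v <= C * `|v|.
    by apply: le_trans (N_le_mx_norm v) _; rewrite ler_wpM2r ?lerDl.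
  have := ler_ND (y - z) z; have := ler_ND (z - y) y; rewrite !subrK.
  have := le_C (y - z); have := le_C (z - y); rewrite distrC ler_norml; lra.
move=> x; apply/(@cvgrPdist_lt R R^o _ (nbhs x) (nbhs_filter x)) => e e0.
apply/(@nbhs_normP R V x).
exists (e / C) => [|y /=]; first by rewrite /= divr_gt0.
by rewrite ltr_pdivlMr // mulrC => /(le_lt_trans (N_lip x y)).
Qed.

Lemma N_ge_mx_norm : exists2 c, 0 < c & forall x, c * `|x| <= N x.
Proof.
pose S := [set x : V | `|x| = 1].
have normalize x : x != 0 -> S (`|x|^-1 *: x).
  by move=> x0; rewrite /S /= normrZ normfV normr_id mulVf ?normr_eq0.
have [S0|/set0P[u Su]] := eqVneq S set0.
  exists 1 => // x; rewrite mul1r.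
  have [->|/normalize] := eqVneq x 0; first by rewrite normr0 N_ge0.
  by rewrite S0.
have cS : compact S.
  apply: bounded_closed_compact.
    by exists 1; split => // r r1 x /= ->; exact: ltW.
  have -> : S = (fun x : V => `|x|) @^-1` [set 1] by [].
  by apply: closed_comp => // x _; exact: norm_continuous.
have [c Sc cmin] :=
  compact_EVT_min (ex_intro _ u Su) cS (continuous_subspaceT N_continuous).
exists (N c).
  rewrite lt0r N_ge0 andbT; apply/eqP => /N_eq0 c0.
  by move: Sc; rewrite inE /S /= c0 normr0 => /esym/eqP; rewrite oner_eq0.
move=> x; have [->|x0] := eqVneq x 0; first by rewrite normr0 mulr0 N_ge0.
have := cmin _ (mem_set (normalize x x0)).
by rewrite NZ normfV normr_id ler_pdivlMl ?normr_gt0 // mulrC.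
Qed.

Lemma dual_norm_has_sup y : has_sup [set pair y x | x in [set x | N x <= 1]].
Proof.
have [c c0 hc] := N_ge_mx_norm.
split; first by exists (pair y 0), 0 => //=; rewrite N0.
exists (d%:R * `|y| / c) => _ [x /= Nx1 <-].
apply: le_trans (pair_le_normr y x) _; rewrite -mulrA ler_wpM2l //.
rewrite ler_pdivlMr // -mulrA ler_piMr // mulrC.
exact: le_trans (hc x) Nx1.
Qed.

Lemma pair_le_dual_norm y v : pair y v <= dual_norm N y * N v.
Proof.
have [->|v0] := eqVneq v 0; first by rewrite pair0r N0 mulr0.
have Nv0 : 0 < N v.
  by rewrite lt0r N_ge0 andbT; apply: contra_neq v0; exact: N_eq0.
rewrite -ler_pdivrMr // mulrC -pairZr.
apply: sup_upper_bound; first exact: dual_norm_has_sup.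
by exists ((N v)^-1 *: v) => //=; rewrite NZ gtr0_norm ?invr_gt0 // mulVf ?gt_eqF.
Qed.

Lemma pair_le_dual_norm_sqr {y v} {s : R} :
  0 <= s -> dual_norm N y ^+ 2 <= s ^+ 2 -> pair y v <= s * N v.
Proof.
move=> s0 ys; apply: le_trans (pair_le_dual_norm y v) (ler_wpM2r (N_ge0 v) _).
apply: le_trans (ler_norm _) _.
by rewrite -(ger0_norm s0) -!sqrtr_sqr ler_wsqrtr.
Qed.

End Norm.

Section Analysis.
Context {R : realType}.

Lemma le0_near0 (A C : R) : (\forall s \near 0^'+, A <= s * C) -> A <= 0.
Proof.
move=> AsC; rewrite leNgt; apply/negP => A0.
have e0 : 0 < A / (`|C| + 1) by rewrite divr_gt0 // ltr_pwDr.
have [s [[/= s0 se] sC]] :=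
  filter_ex (filterI (filterI (nbhs_right_gt 0) (nbhs_right_lt e0)) AsC).
have : s * C < A.
  apply: le_lt_trans (ler_norm _) _; rewrite normrM gtr0_norm //.
  apply: le_lt_trans (_ : s * (`|C| + 1) < A).
    by rewrite ler_wpM2l ?lerDl // ltW.
  by rewrite -ltr_pdivlMr // ltr_pwDr.
by rewrite ltNge sC.
Qed.

Lemma ereal_between (a b : \bar R) :
  (a < b)%E -> exists r : R, (a < r%:E < b)%E.
Proof.
case: a => [a||]; case: b => [b||] //= ab.
- exists ((a + b) / 2); move: ab; rewrite !lte_fin => ab.
  by apply/andP; split; lra.
- by exists (a + 1); rewrite lte_fin ltey andbT; lra.
- by exists (b - 1); rewrite lte_fin ltNye /=; lra.
- by exists 0; rewrite ltNye ltey.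
Qed.

Lemma lsc_addr_continuous {T : topologicalType}
    [h : T -> \bar R] [g : T -> R] :
  lower_semicontinuous h -> continuous g ->
  lower_semicontinuous (fun x => h x + (g x)%:E)%E.
Proof.
move=> hl gc x a /ereal_between[r /andP[ar rhg]].
have /hl[U1 U1x hU1] : ((r - g x)%:E < h x)%E.
  by rewrite EFinB lteBlDr.
have ra : 0 < r - a by rewrite subr_gt0 -lte_fin.
have /cvgrPdist_lt/(_ _ ra) U2x := gc x.
exists (U1 `&` [set y | `|g x - g y| < r - a]); first exact: filterI.
move=> y [/hU1 hy /= gy].
apply: (@le_lt_trans _ _ ((r - g x)%:E + (g y)%:E)%E); last exact: lte_leD.
by rewrite -EFinD lee_fin; have := ler_norm (g x - g y); lra.
Qed.

Lemma lsc_compact_attains_min {T : topologicalType}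
    [phi : T -> \bar R] [S : set T] :
  lower_semicontinuous phi -> compact S -> S !=set0 ->
  exists2 p, S p & forall q, S q -> (phi p <= phi q)%E.
Proof.
move=> phil cS [b Sb]; pose m := ereal_inf (phi @` S).
suff [p Sp pm] : exists2 p, S p & (phi p <= m)%E.
  by exists p => // q Sq; apply: le_trans pm (ereal_inf_lbound _); exists q.
have [->|] := eqVneq m +oo%E; first by exists b; rewrite ?leey.
rewrite -ltey => /ereal_between[r0 /andP[mr0 _]].
pose D := [set r : R | (m < r%:E)%E].
pose B r := [set p | S p /\ (phi p < r%:E)%E].
have BF : ProperFilter (filter_from D B).
  apply: filter_from_proper; last first.
    by move=> r /ereal_inf_lt[_ [p Sp <-] pr]; exists p.
  apply: filter_from_filter => [|r s mr ms]; first by exists r0.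
  exists (Num.min r s); first by rewrite /D /= EFin_min lt_min mr ms.
  by move=> p [Sp]; rewrite EFin_min lt_min => /andP[pr ps].
have [p [Sp pcl]] :=
  cS _ BF (ex_intro2 _ _ r0 mr0 (fun q (Bq : B r0 q) => Bq.1)).
exists p => //; rewrite leNgt; apply/negP => /ereal_between[r /andP[mr rp]].
have [U Up rU] := phil p r rp.
have [q [[_ qr] /rU]] := pcl (B r) U (ex_intro2 _ _ r mr (fun _ => id)) Up.
by rewrite ltNge ltW.
Qed.

Lemma within_continuous_dist_lt {U W : normedModType R} {A : set U}
    {f : U -> W} {x : U} {e : R} :
  {within A, continuous f} -> A x -> 0 < e ->
  exists2 del, 0 < del & forall y, A y -> `|x - y| < del -> `|f x - f y| < e.
Proof.
move=> fc Ax e0.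
have fx : f @ within A (nbhs x) --> f x.
  by rewrite (nbhs_subspace_in Ax); exact: fc.
have := cvgr_dist_lt (FF := within_filter _ (nbhs_filter x)) _ _ fx _ e0.
rewrite /within /= => /(iffLR (nbhs_normP _ _))[del /= del0 hdel].
by exists del => // y Ay xy; exact: hdel.
Qed.

End Analysis.

Section Proximal.
Context {R : realType} {d : nat}.
Local Notation V := 'rV[R]_d.
Context {h : V -> \bar R}.
Hypothesis h_cvx : cvx_efun h.
Hypothesis h_lsc : lower_semicontinuous h.
Hypothesis h_neqNy : forall x, h x <> -oo%E.

Definition penalty (u a : V) (c : R) (p : V) : R :=
  c * pair (p - a) (p - a) - pair u p.

Lemma penaltyD u a c p v : penalty u a c (p + v) =
  penalty u a c p - pair (u - (2 * c) *: (p - a)) v + c * pair v v.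
Proof.
rewrite /penalty (_ : p + v - a = (p - a) + v); last by rewrite addrAC.
by rewrite pair_selfD [pair (u - _) v]pairBl pairZl [pair u _]pairDr; ring.
Qed.

Lemma penalty_continuous u a c : continuous (penalty u a c).
Proof.
have pa : continuous (fun p : V => p - a).
  by move=> p; apply: continuousB => //; exact: cst_continuous.
have paa : continuous (fun p : V => pair (p - a) (p - a)) :=
  pair_continuous pa pa.
have pu : continuous (fun p : V => pair u p).
  by apply: (@pair_continuous _ _ _ (cst u) id); [exact: cst_continuous | move=> p].
move=> p; apply: (@cvgB _ _ _ _ (nbhs_filter p)); last exact: pu.
by apply: (@cvgM _ _ _ (nbhs_filter p)); [exact: cvg_cst | exact: paa].
Qed.

Lemma fin_num_le {x : V} {r : R} : (h x <= r%:E)%E -> h x \is a fin_num.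
Proof.
move=> hr; rewrite fin_numElt (le_lt_trans hr (ltey _)) andbT.
by rewrite ltNge leeNy_eq; apply/eqP.
Qed.

Lemma subdiff_penalty_min {u a c p} : 0 <= c -> h p \is a fin_num ->
  (forall q, (h p + (penalty u a c p)%:E <= h q + (penalty u a c q)%:E)%E) ->
  subdiff h p (u - (2 * c) *: (p - a)).
Proof.
move=> c0 hpf pmin; split => // x.
case hx : (h x) (h_neqNy x) => [H||] // _; last by rewrite leey.
rewrite -(fineK hpf) -EFinD lee_fin -subr_le0.
set s := u - (2 * c) *: (p - a); set v := x - p; set Hp := fine (h p).
apply: (@le0_near0 _ _ (c * pair v v)); near=> t.
have t0 : 0 < t by near: t; exact: nbhs_right_gt.
have t1 : t <= 1 by near: t; exact: nbhs_right_le.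
have ptv : t *: x + (1 - t) *: p = p + t *: v.
  by apply/rowP => i; rewrite !mxE; ring.
have t01 : 0 <= t <= 1 by rewrite ltW.
have := h_cvx x p t t01.
rewrite ptv hx -(fineK hpf) -!EFinM -EFinD => cvx_t.
have htf := fin_num_le cvx_t.
have := pmin (p + t *: v); rewrite -(fineK htf) -(fineK hpf) -!EFinD.
rewrite lee_fin penaltyD pairZr pair_selfZ -/s -/Hp => min_t.
rewrite -(fineK htf) lee_fin -/Hp in cvx_t.
by rewrite -(ler_pM2l t0) mulrA -expr2; nra.
Unshelve. all: by end_near.
Qed.

Lemma penalty_coercive u a {c x0 s0} : 0 < c -> subdiff h x0 s0 ->
  exists C0 : R, forall p,
    ((C0 + c / 2 * pair (p - a) (p - a))%:E <= h p + (penalty u a c p)%:E)%E.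
Proof.
move=> c0 [hx0f hs0]; set w := s0 - u.
exists (fine (h x0) + pair s0 (a - x0) - pair u a - pair w w / (2 * c)) => p.
apply: le_trans (leeD (hs0 p) (lexx _)); rewrite -(fineK hx0f) -!EFinD lee_fin.
have split_lin : pair s0 (p - x0) - pair u p =
    pair w (p - a) + pair s0 (a - x0) - pair u a.
  by rewrite /w !pairBl !pairBr; ring.
have amgm :
    - pair w w / (2 * c) - c / 2 * pair (p - a) (p - a) <= pair w (p - a).
  rewrite -(@ler_pM2l _ (2 * c)) ?mulr_gt0 //.
  have -> : 2 * c * (- pair w w / (2 * c) - c / 2 * pair (p - a) (p - a)) =
    - pair w w - c ^+ 2 * pair (p - a) (p - a) by field; rewrite gt_eqF.
  have := pair_self_ge0 (w + c *: (p - a)).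
  rewrite pair_selfD pairZr pair_selfZ; nra.
rewrite /penalty; lra.
Qed.

Lemma penalty_min_exists u a {c x0 s0} : 0 < c -> subdiff h x0 s0 ->
  exists2 p, h p \is a fin_num &
    forall q, (h p + (penalty u a c p)%:E <= h q + (penalty u a c q)%:E)%E.
Proof.
move=> c0 hs0; pose phi p := (h p + (penalty u a c p)%:E)%E.
have [C0 phi_ge] := penalty_coercive u a c0 hs0.
pose M := fine (phi x0); pose S := [set p | (phi p <= M%:E)%E].
have Sx0 : S x0 by rewrite /S /= /M fineK // fin_numD hs0.1.
have phi_lsc : lower_semicontinuous phi.
  exact: lsc_addr_continuous h_lsc (penalty_continuous u a c).
have cS : compact S.
  apply: bounded_closed_compact.
    exists (`|a| + Num.sqrt (2 * (M - C0) / c)); split => // r Br p Sp.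
    apply: le_trans (ltW Br); rewrite -[p](subrK a) addrC.
    apply: le_trans (ler_normD _ _) _; rewrite lerD2l.
    apply: le_trans (normr_le_sqrt_pair _) _; apply: ler_wsqrtr.
    rewrite ler_pdivlMr //; have := le_trans (phi_ge p) Sp; rewrite lee_fin; lra.
  have -> : S = ~` [set p | (M%:E < phi p)%E].
    by apply/seteqP; split => p; rewrite /S /= leNgt => /negP.
  by apply: open_closedC; move/lower_semicontinuousP : phi_lsc; apply.
have [p Sp pmin] := lsc_compact_attains_min phi_lsc cS (ex_intro _ x0 Sx0).
exists p => [|q].
  by move: Sp (h_neqNy p); rewrite /S /phi /=; case: (h p).
have [/pmin//|] := pselect (S q).
by rewrite /S /= => /negP; rewrite -ltNge => /ltW; exact: le_trans Sp.
Qed.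

Lemma affine_minorant_global {x0 s0 u} {r : R} : subdiff h x0 s0 ->
  (forall p, dom_subdiff h p -> ((r + pair u p)%:E <= h p)%E) ->
  forall p, ((r + pair u p)%:E <= h p)%E.
Proof.
move=> hs0 minor p; rewrite leNgt; apply/negP => hlt.
have hpf := fin_num_le (ltW hlt).
have [q hqf qmin] := penalty_min_exists u p ltr01 hs0.
have := minor q (ex_intro _ _ (subdiff_penalty_min ler01 hqf qmin)).
have := qmin p; rewrite -(fineK hpf) -(fineK hqf) -!EFinD !lee_fin.
rewrite -(fineK hpf) lte_fin in hlt.
rewrite /penalty subrr pair0r mulr0 mul1r; have := pair_self_ge0 (q - p); lra.
Qed.

Lemma subdiff_monotone {z1 w1 z2 w2} : subdiff h z1 w1 -> subdiff h z2 w2 ->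
  0 <= pair (w1 - w2) (z1 - z2).
Proof.
move=> [h1f h1] [h2f h2]; have := h1 z2; have := h2 z1.
rewrite -(fineK h1f) -(fineK h2f) -!EFinD !lee_fin pairBl.
rewrite -(opprB z1 z2) pairNr; lra.
Qed.

(* With penalty weight t^-3, minimality of q, convexity of h on [z, x] and
   w ∈ ∂h(z) give t^-3 |q - a|^2 <= t M, where M is the radicand below;
   hence |q - a| <= t^2 sqrt M. *)
Lemma segment_prox_point {z w x t} :
  subdiff h z w -> h x \is a fin_num -> 0 < t <= 1 ->
  exists2 q, dom_subdiff h q &
    `|q - (z + t *: (x - z))| <=
      t ^+ 2 * Num.sqrt (fine (h x) - fine (h z) - pair w (x - z)).
Proof.
move=> hzw hxf /andP[t0 t1]; set a := z + t *: (x - z).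
have c0 : 0 < (t ^+ 3)^-1 by rewrite invr_gt0 exprn_gt0.
have [q hqf qmin] := penalty_min_exists w a c0 hzw.
exists q; first by eexists; exact: subdiff_penalty_min (ltW c0) hqf qmin.
have [hzf hz] := hzw; set M := fine (h x) - fine (h z) - pair w (x - z).
have ta : t *: x + (1 - t) *: z = a by apply/rowP => i; rewrite !mxE; ring.
have := h_cvx x z t; rewrite ltW // t1 ta.
rewrite -(fineK hxf) -(fineK hzf) -!EFinM -EFinD.
move=> /(_ isT) cvx_a; have haf := fin_num_le cvx_a.
rewrite -(fineK haf) lee_fin in cvx_a.
have := qmin a; rewrite -(fineK haf) -(fineK hqf) -!EFinD lee_fin /penalty.
rewrite subrr pair0r mulr0 => min_a.
have := hz q; rewrite -(fineK hzf) -(fineK hqf) -EFinD lee_fin pairBr => sub_z.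
have wa : pair w a = pair w z + t * pair w (x - z) by rewrite /a pairDr pairZr.
have near_a : (t ^+ 3)^-1 * pair (q - a) (q - a) <= t * M by rewrite /M; lra.
apply: le_trans (normr_le_sqrt_pair _) _.
have t2 : `|t ^+ 2| = t ^+ 2 by rewrite ger0_norm // exprn_ge0 // ltW.
rewrite -t2 -sqrtr_sqr -sqrtrM ?sqr_ge0 //.
apply: ler_wsqrtr; rewrite -(ler_pM2l c0).
have -> : (t ^+ 3)^-1 * (t ^+ 2 ^+ 2 * M) = t * M by field; rewrite gt_eqF.
exact: near_a.
Qed.

End Proximal.

Section Selection.
Context {R : realType} {d : nat}.
Local Notation V := 'rV[R]_d.
Context {h : V -> \bar R} {nh : V -> V}.
Hypothesis h_cvx : cvx_efun h.
Hypothesis h_lsc : lower_semicontinuous h.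
Hypothesis h_neqNy : forall x, h x <> -oo%E.
Hypothesis nh_sel : forall x, dom_subdiff h x -> subdiff h x (nh x).
Hypothesis nh_cont : {within dom_subdiff h, continuous nh}.

Lemma subdiff_sel_pair_ge0 {z w x} : subdiff h z w -> h x \is a fin_num ->
  0 <= pair (nh z - w) (x - z).
Proof.
move=> hzw hxf; have zd : dom_subdiff h z by exists w.
set M := fine (h x) - fine (h z) - pair w (x - z).
set Q := `|x - z| + Num.sqrt M.
have Q0 : 0 <= Q by rewrite addr_ge0 ?sqrtr_ge0.
(* Let first t -> 0 (proximal points along the segment towards x), then
   eps -> 0 (continuity of nh at z). *)
rewrite -oppr_le0; apply: (@le0_near0 _ _ (d%:R * `|x - z|)); near=> eps.
have eps0 : 0 < eps by near: eps; exact: nbhs_right_gt.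
have [del del0 near_nh] := within_continuous_dist_lt nh_cont zd eps0.
rewrite -subr_le0.
apply: (@le0_near0 _ _ (d%:R * (eps + `|nh z - w|) * Num.sqrt M)); near=> t.
have t0 : 0 < t by near: t; exact: nbhs_right_gt.
have t1 : t <= 1 by near: t; exact: nbhs_right_le.
have tQ : t * Q < del.
  have tdel : t < del / (Q + 1).
    by near: t; apply: nbhs_right_lt; rewrite divr_gt0 // ltr_pwDr.
  rewrite ltr_pdivlMr ?ltr_pwDr // in tdel.
  by apply: le_lt_trans tdel; apply: ler_wpM2l; [exact: ltW | rewrite lerDl].
have t01 : 0 < t <= 1 by rewrite t0.
have [q qd qa] := segment_prox_point h_cvx h_lsc h_neqNy hzw hxf t01.
have qz : q - z = t *: (x - z) + (q - (z + t *: (x - z))).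
  by apply/rowP => i; rewrite !mxE; ring.
apply: (pair_perturb_le (n1 := nh q) t0 _ qa).
  by rewrite -qz; apply: subdiff_monotone (nh_sel _ qd) hzw.
apply: near_nh => //; rewrite -normrN opprB qz.
apply: le_lt_trans (ler_normD _ _) _; apply: le_lt_trans _ tQ.
rewrite normrZ gtr0_norm // mulrDr lerD2l; apply: le_trans qa _.
by apply: ler_wpM2r; rewrite ?sqrtr_ge0 // expr2 ler_piMl // ltW.
Unshelve. all: by end_near.
Qed.

End Selection.

Section Bregman.
Context {R : realType} {d : nat}.
Local Notation V := 'rV[R]_d.
Context {N : V -> R} {X : set V} {h : V -> \bar R} {nh : V -> V} {K : R}.
Hypothesis HB : bregman_fun N X h nh K.

Let h_cvx : cvx_efun h. Proof. by case: HB => -[]. Qed.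
Let h_lsc : lower_semicontinuous h. Proof. by case: HB => -[_ []]. Qed.
Let h_neqNy x : h x <> -oo%E. Proof. by case: HB => -[_ [_]]. Qed.
Let nh_sel x : dom_subdiff h x -> subdiff h x (nh x).
Proof. by case: HB => _ _ [sel _] _ _; exact: sel. Qed.
Let nh_cont : {within dom_subdiff h, continuous nh}.
Proof. by case: HB => _ _ []. Qed.

Lemma breg_ge_sqrN {x x'} : dom_subdiff h x -> dom_subdiff h x' ->
  K / 2 * N (x' - x) ^+ 2 <= breg h nh x' x.
Proof.
move=> xd x'd; have [hxf _] := nh_sel _ xd; have [hx'f _] := nh_sel _ x'd.
case: HB => _ _ _ _ /(_ _ _ xd x'd).
by rewrite -(fineK hxf) -(fineK hx'f) -!EFinD lee_fin /breg; lra.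
Qed.

Lemma prox_subdiff {x y z} : dom_subdiff h x -> is_prox X h nh x y z ->
  subdiff h z (nh x + y).
Proof.
move=> xd [Xz zmin].
have [domX Xfin] : dom_subdiff h `<=` X /\ X `<=` edom h by case: HB.
have fin_X p : X p -> h p \is a fin_num.
  move=> /Xfin; rewrite /edom /= fin_numElt => ->; rewrite andbT ltNge leeNy_eq.
  by apply/eqP; exact: h_neqNy.
have hzf := fin_X z Xz; pose r := fine (h z) - pair (nh x + y) z.
have minor p : dom_subdiff h p -> ((r + pair (nh x + y) p)%:E <= h p)%E.
  move=> /domX Xp; have := zmin p Xp.
  rewrite /breg -(fineK (fin_X p Xp)) lee_fin /r !pairBr !pairDl; lra.
have global := affine_minorant_global h_cvx h_lsc h_neqNy (nh_sel _ xd) minor.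
split => // p; apply: le_trans (global p).
by rewrite -(fineK hzf) -EFinD lee_fin /r pairBr; lra.
Qed.

Lemma breg_sum_prox_le {x y z} : dom_subdiff h x -> is_prox X h nh x y z ->
  breg h nh z x + breg h nh x z <= pair y (z - x).
Proof.
move=> xd zp; have := subdiff_sel_pair_ge0 h_cvx h_lsc h_neqNy nh_sel nh_cont
  (prox_subdiff xd zp) (nh_sel _ xd).1.
have flip a : pair a (z - x) = - pair a (x - z) by rewrite -pairNr opprB.
by rewrite /breg !flip !pairBl pairDl; lra.
Qed.

Lemma prox_iter_dom (x y : nat -> V) : dom_subdiff h (x 1%N) ->
  (forall t, (1 <= t)%N -> is_prox X h nh (x t) (y t) (x t.+1)) ->
  forall t, (1 <= t)%N -> dom_subdiff h (x t).
Proof.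
move=> x1d xp; elim=> // -[_ _ //|t IH _].
by exists (nh (x t.+1) + y t.+1); exact: prox_subdiff (IH isT) (xp t.+1 isT).
Qed.

End Bregman.

Section StepSize.
Context {R : realType}.

Lemma step_ratio_sqr_le {D1 D2 n g G s K : R} :
  0 < K -> 0 <= G -> 0 <= s -> 0 <= g -> 0 <= n ->
  K / 2 * n ^+ 2 <= D1 -> K / 2 * n ^+ 2 <= D2 ->
  D1 + D2 <= g * (G * Num.sqrt (2 * D1) + s * n) ->
  (Num.sqrt (D2 + D1) / g) ^+ 2 <= (Num.sqrt 2 * G + Num.sqrt (2 / K) * s) ^+ 2.
Proof.
move=> K0 G0 s0 g0 n0 nD1 nD2 descent.
set C := Num.sqrt 2 * G + Num.sqrt (2 / K) * s; set b := Num.sqrt (D2 + D1).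
have Kn2 : 0 <= K / 2 * n ^+ 2 by rewrite mulr_ge0 ?sqr_ge0 // divr_ge0 // ltW.
have bB : b ^+ 2 = D2 + D1 by rewrite sqr_sqrtr //; lra.
have sD1 : Num.sqrt (2 * D1) <= Num.sqrt 2 * b.
  by rewrite -sqrtrM // ler_wsqrtr //; lra.
have sn : n <= Num.sqrt (2 / K) * b.
  have K20 : 0 <= 2 / K by rewrite divr_ge0 // ltW.
  rewrite -sqrtrM // -[leLHS](ger0_norm n0) -sqrtr_sqr ler_wsqrtr //.
  rewrite -(ler_pM2l K0).
  have -> : K * (2 / K * (D2 + D1)) = 2 * (D2 + D1) by field; rewrite gt_eqF.
  lra.
have bgC : b ^+ 2 <= g * C * b.
  rewrite bB addrC; apply: le_trans descent _; rewrite -mulrA ler_wpM2l //.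
  have -> : C * b = G * (Num.sqrt 2 * b) + s * (Num.sqrt (2 / K) * b).
    by rewrite /C; ring.
  by apply: lerD; apply: ler_wpM2l.
(* [_ / 0 = 0]: a vanishing step size makes the ratio 0. *)
have [->|gn0] := eqVneq g 0; first by rewrite invr0 mulr0 expr0n /= sqr_ge0.
rewrite ler_sqr ?nnegrE ?divr_ge0 ?sqrtr_ge0 ?addr_ge0 ?mulr_ge0 ?sqrtr_ge0 //.
have [b0|bn0] := eqVneq b 0.
  by rewrite b0 mul0r addr_ge0 ?mulr_ge0 ?sqrtr_ge0.
rewrite ler_pdivrMr ?lt0r ?gn0 // mulrC.
by move: bgC; rewrite expr2 ler_pM2r // lt0r bn0 sqrtr_ge0.
Qed.

End StepSize.

Theorem lemmaB2 (R : realType) (d : nat) (N : 'rV[R]_d -> R) (X : set 'rV[R]_d)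
  (f h : 'rV[R]_d -> \bar R) (nf nh : 'rV[R]_d -> 'rV[R]_d) (K G sigma : R)
  (dO : measure_display) (Omega : measurableType dO) (P : probability Omega R)
  (x U : nat -> Omega -> 'rV[R]_d) (delta : nat -> Omega -> R)
  (x0 x1 : 'rV[R]_d) :
  is_norm N ->
  cvx_set X ->
  proper_fun f -> lower_semicontinuous f -> cvx_efun f -> edom f = X ->
  (exists xs, forall z, (f xs <= f z)%E) ->
  (forall z, dom_subdiff f z -> subdiff f z (nf z)) ->
  bregman_fun N X h nh K ->
  rel_continuous f nf h nh G ->
  0 <= sigma ->
  dom_subdiff h x0 -> dom_subdiff h x1 -> x0 != x1 ->
  (forall w, x 0%N w = x0) -> (forall w, x 1%N w = x1) ->
  (forall w, delta 0%N w = Num.sqrt (breg h nh x0 x1 + breg h nh x1 x0)) ->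
  (forall t (i : 'I_d), measurable_fun setT (fun w => x t w ord0 i)) ->
  (forall t (i : 'I_d), (1 <= t)%N -> measurable_fun setT (fun w => U t w ord0 i)) ->
  (forall t (i : 'I_d) (A : set Omega), (1 <= t)%N -> nat_filtration x t A ->
     (\int[P]_(w in A) (U t w ord0 i)%:E = 0)%E) ->
  (forall t, (1 <= t)%N ->
     {ae P, forall w, dual_norm N (U t w) ^+ 2 <= sigma ^+ 2}) ->
  (forall t w, (1 <= t)%N ->
     is_prox X h nh (x t w) (- (gamma delta t w *: (nf (x t w) + U t w))) (x t.+1 w)) ->
  (forall t w, (1 <= t)%N ->
     delta t w = Num.sqrt (breg h nh (x t w) (x t.+1 w) + breg h nh (x t.+1 w) (x t w))
                 / gamma delta t w) ->
  {ae P, forall w, forall t, (1 <= t)%N ->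
     delta t w ^+ 2 <= (Num.sqrt 2 * G + Num.sqrt (2 / K) * sigma) ^+ 2}.
Proof.
move=> HN _ _ _ _ _ _ _ HB [G0 f_rel] sig0 _ x1d _ _ x1E _ _ _ _ noise prox delta_E.
have K0 : 0 < K by case: HB.
have /ae_foralln noise_ae : forall t, {ae P, forall w, (1 <= t)%N ->
    dual_norm N (U t w) ^+ 2 <= sigma ^+ 2}.
  by case=> [|t]; [exact: nearW | exact: filterS (noise t.+1 isT)].
apply: filterS noise_ae => w noise_w t t1.
have x_dom s : (1 <= s)%N -> dom_subdiff h (x s w).
  by apply: (prox_iter_dom HB (x^~ w) _ _ (prox^~ w)); rewrite /= x1E.
have [xtd zd] := (x_dom t t1, x_dom t.+1 isT).
have z_edom : edom h (x t.+1 w).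
  by case: HB => _ [domX Xdom] _ _ _; exact/Xdom/domX.
rewrite delta_E //.
apply: (step_ratio_sqr_le K0 (ltW G0) sig0 _ (N_ge0 HN (x t w - x t.+1 w))).
- by rewrite invr_ge0 sqrtr_ge0.
- by have := breg_ge_sqrN HB xtd zd; rewrite -opprB (NN HN).
- exact: (breg_ge_sqrN HB zd xtd).
apply: le_trans (breg_sum_prox_le HB xtd (prox t w t1)) _.
rewrite pairNl pairZl -mulrN -pairNr opprB pairDl.
rewrite ler_wpM2l ?invr_ge0 ?sqrtr_ge0 //.
apply: lerD; first exact: (f_rel _ _ xtd z_edom).2.
exact: (pair_le_dual_norm_sqr HN sig0 (noise_w t t1)).
Qed.
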